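(* Let $d\ge 2$ and let $\mathcal P$ and $\mathcal H$ be as defined in the context. Then $\operatorname{I}(\mathcal P,\mathcal H)\ \ge\ \left(1-\frac{2}{e^2}\right)2^{2d-2}$; in particular $\operatorname{I}(\mathcal P,\mathcal H)\ge\Omega(2^{2d})$.
   Context: Let $d\ge 2$. Define the point set $\mathcal P=\{(x_1,\dots,x_d): x_1,\dots,x_{d-1}\in\{-1,1\},\ x_d\in\mathbb Z,\ |x_d|\le 2\sqrt{d-1}\}$ and the hyperplane set $\mathcal H=\{\{x\in\mathbb R^d:\sum_{i=1}^d a_ix_i=0\}: a_1,\dots,a_{d-1}\in\{0,1\},\ a_d=-1\}$ (so $|\mathcal H|=2^{d-1}$). $\operatorname{I}(\mathcal P,\mathcal H)$ is the number of pairs $(p,h)\in\mathcal P\times\mathcal H$ with $p\in h$. *)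

From HB Require Import structures.
From mathcomp Require Import all_boot all_order all_algebra.
From mathcomp Require Import reals.
From mathcomp Require Import sequences exp.
Set Implicit Arguments. Unset Strict Implicit. Unset Printing Implicit Defensive.
Import Order.TTheory GRing.Theory Num.Theory.
Local Open Scope ring_scope.

Section Incidences.
Variable R : realType.
Variable d : nat.

(* Parameters of a candidate point: signs s of x_1..x_{d-1} (true = 1,
   false = -1) and the last coordinate x_d = k - 2d, k : 'I_(4d+1),
   i.e. x_d ranges over the integers in [-2d, 2d], a window that contains
   every integer with |x_d| <= 2 sqrt(d-1). *)
Definition ptparam := ({ffun 'I_(d.-1) -> bool} * 'I_(4 * d).+1)%type.

Definition sgn (b : bool) : R := if b then 1 else -1.

Definition lastcoord (p : ptparam) : int := (p.2 : nat)%:Z - (2 * d)%:Z.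

Definition point (p : ptparam) : 'rV[R]_d :=
  \row_(j < d) (if (insub (j : nat) : option 'I_(d.-1)) is Some i then sgn (p.1 i)
                 else (lastcoord p)%:~R).

(* Membership in the point set P (x_1..x_{d-1} in {-1,1} hold by
   construction, x_d integer by construction). *)
Definition inP (p : ptparam) : bool :=
  (`|lastcoord p|%:~R : R) <= 2 * Num.sqrt (d.-1)%:R.

(* Hyperplanes are indexed by a in {0,1}^{d-1}; the normal vector is
   (a_1,...,a_{d-1}, -1). *)
Definition hparam := {ffun 'I_(d.-1) -> bool}.

Definition normal (a : hparam) : 'rV[R]_d :=
  \row_(j < d) (if (insub (j : nat) : option 'I_(d.-1)) is Some i then ((a i : nat)%:R)
                 else -1).

Definition incident (p : ptparam) (a : hparam) : bool :=
  \sum_(j < d) normal a 0 j * point p 0 j == 0.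

Definition incidences : nat :=
  #|[set pa : ptparam * hparam | inP pa.1 && incident pa.1 pa.2]|.

End Incidences.

From HB Require Import structures.
From mathcomp Require Import all_boot all_order all_algebra.
From mathcomp Require Import reals.
From mathcomp Require Import sequences exp.
From mathcomp Require Import zify ring lra.
Import Order.TTheory GRing.Theory Num.Theory.
Local Open Scope ring_scope.

(* Write d = n + 1.  A point of P is a sign vector s in {-1,1}^n followed by
   an integer x_d, and it lies on the hyperplane with normal (a, -1),
   a in {0,1}^n, exactly when x_d equals the signed sum S(s,a) = sum_i a_i s_i.
   Hence every pair (s, a) with S(s,a)^2 < 4n yields an incidence (the point
   (s, S(s,a)) is in P since |S(s,a)| < 2 sqrt n), and distinct pairs yield
   distinct incidences.  To count these pairs we use a second-moment
   (Chebyshev) argument: by orthogonality of the sign characters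
   s |-> s_i, the sum of S(s,a)^2 over all s is at most n 2^n for each a, so
   by Markov's inequality at most a quarter of the 4^n pairs satisfy
   S(s,a)^2 >= 4n.  This gives I(P,H) >= (3/4) 4^n, and the stated constant
   1 - 2/e^2 is below 3/4.
   The file first proves the orthogonality relations, the second moment and
   the count of unbalanced pairs, then the geometric characterisation of
   incidences and membership in P, and finally the theorem. *)

Definition sign (b : bool) : int := if b then 1 else -1.

Lemma sign_sqr (b : bool) : sign b * sign b = 1.
Proof. by case: b; rewrite /sign ?mulN1r ?opprK ?mulr1. Qed.

Definition signed_sum {n} (s a : {ffun 'I_n -> bool}) : int :=
  \sum_(i < n) (a i : nat)%:Z * sign (s i).

(* Flipping the i-th sign: an involution of the sign vectors, used to show
   that the characters s |-> s_i and s |-> s_j are orthogonal. *)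
Definition flip {n} (i : 'I_n) (f : {ffun 'I_n -> bool}) : {ffun 'I_n -> bool} :=
  [ffun k => if k == i then ~~ f k else f k].

Lemma flipK {n} (i : 'I_n) : involutive (flip i).
Proof. by move=> f; apply/ffunP => k; rewrite !ffunE; case: eqP; rewrite ?negbK. Qed.

Lemma sum_sign_cross n (i j : 'I_n) : i != j ->
  \sum_(s : {ffun 'I_n -> bool}) sign (s i) * sign (s j) = 0.
Proof.
move=> neq_ij; set X := \sum_(s : _) _.
have X_opp : X = - X.
  rewrite {1}/X (reindex_inj (inv_inj (flipK i))) /X -sumrN.
  apply: eq_bigr => s _; rewrite !ffunE eqxx [j == i]eq_sym (negbTE neq_ij).
  by case: (s i); rewrite /= ?mulN1r ?mul1r ?opprK.
by move/eqP: X_opp; rewrite -addr_eq0 -mulr2n mulrn_eq0 => /eqP.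
Qed.

Lemma sum_sign_diag n (i : 'I_n) :
  \sum_(s : {ffun 'I_n -> bool}) sign (s i) * sign (s i) = (2 ^ n)%:Z.
Proof.
under eq_bigr do rewrite sign_sqr.
by rewrite sumr_const card_ffun card_bool card_ord natz.
Qed.

Lemma second_moment n (a : {ffun 'I_n -> bool}) :
  \sum_(s : {ffun 'I_n -> bool}) signed_sum s a ^+ 2 <= (n * 2 ^ n)%:Z.
Proof.
have expand s : signed_sum s a ^+ 2 = \sum_(i < n) \sum_(j < n)
    ((a i : nat)%:Z * (a j : nat)%:Z * (sign (s i) * sign (s j))).
  rewrite expr2 /signed_sum mulr_suml; apply: eq_bigr => i _.
  by rewrite mulr_sumr; apply: eq_bigr => j _; ring.
have diagonal i : \sum_(s : {ffun 'I_n -> bool}) \sum_(j < n)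
    ((a i : nat)%:Z * (a j : nat)%:Z * (sign (s i) * sign (s j)))
    = (a i : nat)%:Z * (a i : nat)%:Z * (2 ^ n)%:Z.
  rewrite exchange_big (bigD1 i) //= -mulr_sumr sum_sign_diag big1 ?addr0 //.
  by move=> j neq_ji; rewrite -mulr_sumr sum_sign_cross ?mulr0 // eq_sym.
rewrite (eq_bigr _ (fun s _ => expand s)) exchange_big.
under eq_bigr do rewrite diagonal.
apply: le_trans (_ : \sum_(i < n) (2 ^ n)%:Z <= _).
  by apply: ler_sum => i _; case: (a i); rewrite ?mul1r ?mul0r.
by rewrite sumr_const card_ord -mulr_natr natz -PoszM mulnC.
Qed.

Lemma markov_count {T : finType} {R : numDomainType} (f : T -> R) (c : R) :
  (forall x, 0 <= f x) -> c *+ #|[set x | c <= f x]| <= \sum_x f x.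
Proof.
move=> f_ge0; rewrite -sumr_const big_mkcond /=; apply: ler_sum => x _.
by rewrite inE; case: ifP.
Qed.

(* The pairs (s, a) whose signed sum is too large to give a point of P. *)
Definition unbalanced n : {set {ffun 'I_n -> bool} * {ffun 'I_n -> bool}} :=
  [set sa | (4 * n)%:Z <= signed_sum sa.1 sa.2 ^+ 2].

Lemma card_unbalanced {n : nat} :
  (0 < n)%N -> (4 * #|unbalanced n| <= 2 ^ n * 2 ^ n)%N.
Proof.
move=> n_gt0.
have markov := markov_count
  (fun sa : {ffun 'I_n -> bool} * {ffun 'I_n -> bool} => signed_sum sa.1 sa.2 ^+ 2)
  (4 * n)%:Z (fun sa => sqr_ge0 _).
have moment : \sum_(sa : {ffun 'I_n -> bool} * {ffun 'I_n -> bool})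
    signed_sum sa.1 sa.2 ^+ 2 <= (n * 2 ^ n)%:Z *+ 2 ^ n.
  rewrite -(pair_bigA _ (fun s a => signed_sum s a ^+ 2)) exchange_big /=.
  have card_signs : #|{ffun 'I_n -> bool}| = (2 ^ n)%N.
    by rewrite card_ffun card_bool card_ord.
  rewrite -[X in _ *+ X]card_signs -sumr_const.
  by apply: ler_sum => a _; apply: second_moment.
have := le_trans markov moment.
rewrite -/(unbalanced n) !pmulrn !mulrzz -!PoszM lez_nat => bound.
by rewrite -(@leq_pmul2l n) // mulnCA !mulnA.
Qed.

Lemma insub_ord_match {T : Type} {n : nat} (F : 'I_n -> T) (x0 : T) (i : 'I_n) :
  match insub (i : nat) with Some k => F k | None => x0 end = F i.
Proof. by rewrite valK. Qed.

Section Geometry.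
Variable R : realType.

Lemma inP_sqr (d : nat) (p : ptparam d) :
  inP R p = (lastcoord p ^+ 2 <= (4 * d.-1)%:Z).
Proof.
rewrite /inP -ler_sqr ?nnegrE ?mulr_ge0 ?sqrtr_ge0 //.
rewrite exprMn sqr_sqrtr ?ler0n // -rmorphXn /= real_normK ?num_real //.
suff -> : (2 ^+ 2 * d.-1%:R : R) = ((4 * d.-1)%N%:Z)%:~R by rewrite ler_int.
by rewrite -[RHS]/((4 * d.-1)%:R : R) natrM expr2 -natrM.
Qed.

Variable n : nat.

Lemma incident_signed_sum (p : ptparam n.+1) (a : hparam n.+1) :
  incident R p a = (lastcoord p == signed_sum p.1 a).
Proof.
case: p => s k; rewrite /incident big_ord_recr /= !mxE insubF ?ltnn //=.
under eq_bigr => i _ do rewrite !mxE /= !insub_ord_match.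
have -> : \sum_(i < n) ((a i)%:R * sgn R (s i)) = (signed_sum s a)%:~R.
  rewrite /signed_sum rmorph_sum; apply: eq_bigr => i _; rewrite rmorphM /=.
  by case: (s i); rewrite /sgn /sign ?rmorphN ?rmorph1.
by rewrite mulN1r subr_eq0 eqr_int eq_sym.
Qed.

Definition encode_last (z : int) : 'I_(4 * n.+1).+1 :=
  inord (absz (z + (2 * n.+1)%:Z)).

Lemma lastcoord_encode (s : {ffun 'I_n -> bool}) (z : int) :
  - (2 * n.+1)%:Z <= z <= (2 * n.+1)%:Z ->
  lastcoord (d := n.+1) (s, encode_last z) = z.
Proof.
move=> z_range; rewrite /lastcoord /= inordK; last by lia.
by rewrite gez0_abs ?addrK //; lia.
Qed.

(* Each balanced pair (s, a), i.e. with S(s,a)^2 < 4n, gives an incidence: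
   the point (s, S(s,a)) lies in P and on the hyperplane of a. *)
Lemma card_balanced_le_incidences : (#|~: unbalanced n| <= incidences R n.+1)%N.
Proof.
pose incidence_of (sa : {ffun 'I_n -> bool} * {ffun 'I_n -> bool}) :
  ptparam n.+1 * hparam n.+1 :=
  ((sa.1, encode_last (signed_sum sa.1 sa.2)), sa.2).
have inj_incidence : injective incidence_of by move=> [s a] [s' a'] [-> _ ->].
rewrite /incidences -(card_imset _ inj_incidence).
apply/subset_leq_card/subsetP => _ /imsetP [[s a] balanced ->].
rewrite !inE -ltNge /= in balanced.
have range : - (2 * n.+1)%:Z <= signed_sum s a <= (2 * n.+1)%:Z by nia.
rewrite inE /= inP_sqr incident_signed_sum /= !lastcoord_encode //.
by rewrite eqxx andbT ltW.
Qed.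
End Geometry.

(* e^2 <= 8, from e^(-1/16) >= 1 - 1/16 and (15/16)^32 >= 1/8. *)
Lemma inv_expR1_sqr_ge (R : realType) : 1 / 8 <= (expR 1 ^+ 2)^-1 :> R.
Proof.
have tangent : (15 / 16 : R) <= expR (- (1 / 16)).
  by apply: le_trans (expR_ge1Dx _); lra.
have : (15 / 16 : R) ^+ 32 <= expR (- (1 / 16)) ^+ 32.
  by apply: lerXn2r => //; rewrite nnegrE; lra.
rewrite -expRM_natr (_ : - (1 / 16) * 32%:R = - 2 :> R); last by lra.
rewrite expRN -expRM_natr => power_ge; rewrite !mul1r.
by apply: le_trans power_ge; lra.
Qed.

Lemma exp_constant_le (R : realType) : 1 - 2 / expR 1 ^+ 2 <= 3 / 4 :> R.
Proof. have := inv_expR1_sqr_ge R; lra. Qed.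

Theorem proposition4p4 (R : realType) (d : nat) (hd : (2 <= d)%N) :
  (1 - 2 / expR 1 ^+ 2) * 2 ^+ (2 * d - 2) <= (incidences R d)%:R :> R.
Proof.
case: d hd => [|n] // n_gt0.
have unbalanced_few := card_unbalanced n_gt0.
have balanced_incident := card_balanced_le_incidences R n.
have card_pairs : (#|unbalanced n| + #|~: unbalanced n| = 2 ^ n * 2 ^ n)%N.
  by rewrite cardsC card_prod card_ffun card_bool card_ord.
have three_quarters : (3 * (2 ^ n * 2 ^ n) <= 4 * incidences R n.+1)%N.
  move: unbalanced_few balanced_incident card_pairs.
  set P := (2 ^ n * 2 ^ n)%N; lia.
rewrite (_ : (2 * n.+1 - 2)%N = (n + n)%N); last by lia.
apply: le_trans (_ : 3 / 4 * 2 ^+ (n + n) <= _).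
  by apply: ler_wpM2r; [rewrite exprn_ge0 | exact: exp_constant_le].
move: three_quarters; rewrite -(ler_nat R) !natrM !natrX exprD.
by set P : R := 2 ^+ n * 2 ^+ n; lra.
Qed.
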